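(* Let $\mathbb{J}$ denote the class of join-semilattices having a least element. For $\mathbb{B}\subseteq\mathbb{J}$, let $\mathrm{Forb}(\mathbb{B})$ be the class of those $P\in\mathbb{J}$ which contain no join-subsemilattice isomorphic (as a join-semilattice) to a member of $\mathbb{B}$. For an order type $\alpha$, let $\mathbb{J}_{\alpha}$ be the class of $P\in\mathbb{J}$ such that the lattice $J(P)$ of ideals of $P$ contains a chain of order type $I(\alpha)$, and let $\mathbb{J}_{\neg\alpha}:=\mathbb{J}\setminus\mathbb{J}_{\alpha}$. Then for every order type $\alpha$ there is a subset $\mathbb{B}$ of $\mathbb{J}$ with $|\mathbb{B}|\le 2^{|\alpha|}$ such that $\mathbb{J}_{\neg\alpha}=\mathrm{Forb}(\mathbb{B})$.
   Context: An ideal of a poset $P$ is a non-empty up-directed initial segment of $P$; $J(P)$ is the set of ideals of $P$ ordered by inclusion. For a chain $C$ of order type $\alpha$, $I(\alpha)$ denotes the order type of the chain $I(C)$ of all initial segments of $C$ (including $\emptyset$ and $C$) ordered by inclusion; $|\alpha|$ is the cardinality of $C$. A join-subsemilattice of a join-semilattice is a subset closed under binary joins. *)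

(* A chain (linearly ordered set); an order type is represented by a chain. *)
Record Chain := {
  ctype :> Type;
  cle : ctype -> ctype -> Prop;
  cle_refl : forall x, cle x x;
  cle_trans : forall x y z, cle x y -> cle y z -> cle x z;
  cle_antisym : forall x y, cle x y -> cle y x -> x = y;
  cle_total : forall x y, cle x y \/ cle y x
}.

Record JSL := {
  jtype :> Type;
  jle : jtype -> jtype -> Prop;
  jjoin : jtype -> jtype -> jtype;
  jbot : jtype;
  jle_refl : forall x, jle x x;
  jle_trans : forall x y z, jle x y -> jle y z -> jle x z;
  jle_antisym : forall x y, jle x y -> jle y x -> x = y;
  jjoin_ubl : forall x y, jle x (jjoin x y);
  jjoin_ubr : forall x y, jle y (jjoin x y);
  jjoin_lub : forall x y z, jle x z -> jle y z -> jle (jjoin x y) z;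
  jbot_least : forall x, jle jbot x
}.

Definition subset {T : Type} (A B : T -> Prop) : Prop := forall x, A x -> B x.

Definition initial_segment (C : Chain) (S : C -> Prop) : Prop :=
  forall x y, S x -> cle C y x -> S y.

Definition ideal (P : JSL) (I : P -> Prop) : Prop :=
  (exists x, I x) /\
  (forall x y, I x -> jle P y x -> I y) /\
  (forall x y, I x -> I y -> exists z, I z /\ jle P x z /\ jle P y z).

(* P ∈ J_alpha (alpha the order type of C): the lattice J(P) of ideals,
   ordered by inclusion, contains a chain of order type I(alpha), i.e.
   there is an order embedding of I(C) (initial segments of C ordered by
   inclusion) into J(P). *)
Definition J_alpha (C : Chain) (P : JSL) : Prop :=
  exists f : (C -> Prop) -> (P -> Prop),
    (forall S, initial_segment C S -> ideal P (f S)) /\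
    (forall S T, initial_segment C S -> initial_segment C T ->
       (subset S T <-> subset (f S) (f T))).

Definition join_subsemilattice (P : JSL) (S : P -> Prop) : Prop :=
  forall x y, S x -> S y -> S (jjoin P x y).

Definition contains_copy (P Q : JSL) : Prop :=
  exists (S : P -> Prop) (f : Q -> P),
    join_subsemilattice P S /\
    (forall x, S (f x)) /\
    (forall x y, f x = f y -> x = y) /\
    (forall y, S y -> exists x, f x = y) /\
    (forall x y, f (jjoin Q x y) = jjoin P (f x) (f y)).

Definition Forb {I : Type} (B : I -> JSL) (P : JSL) : Prop :=
  forall i, ~ contains_copy P (B i).

(* [P] is in [J_alpha] iff it carries a separating family [a : C -> P]: no
   [a x] lies below a finite join of [a y]'s with [y] in an initial segment
   avoiding [x].  Such a family yields the chain of ideals generated by its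
   restrictions to initial segments; conversely, given a chain of ideals
   indexed by [I(C)], pick [a x] in the ideal of the down-set of [x] but not
   in that of the strict down-set.  So the obstructions are the
   join-semilattices generated by separating families, and such a
   semilattice is determined up to isomorphism by which [a x] lie below which
   finite joins.  For finite [C] the chain [1 + C] is the single obstruction.
   For infinite [C], Hessenberg's theorem [|C * C| = |C|] (proved from Zorn's
   lemma) lets these relations be coded by subsets of [C], whence at most
   [2^|C|] obstructions. *)

From Stdlib Require Import Classical ClassicalEpsilon FunctionalExtensionality
  PropExtensionality ProofIrrelevance List Arith Cantor.
From mathcomp Require classical_sets.

(** * Zorn's lemma and cardinal comparisons *)

Definition nested {T : Type} (F : (T -> Prop) -> Prop) : Prop :=
  forall X Y, F X -> F Y -> subset X Y \/ subset Y X.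

Definition union_of {T : Type} (F : (T -> Prop) -> Prop) : T -> Prop :=
  fun t => exists X, F X /\ X t.

Lemma union_of_common {T : Type} (F : (T -> Prop) -> Prop) t s :
  nested F -> union_of F t -> union_of F s -> exists X, F X /\ X t /\ X s.
Proof.
intros HF [X [FX Xt]] [Y [FY Ys]].
destruct (HF X Y FX FY) as [XY|YX]; [exists Y|exists X]; auto.
Qed.

Lemma zorn_subsets {T : Type} (P : (T -> Prop) -> Prop) :
  (forall F, (forall X, F X -> P X) -> nested F -> P (union_of F)) ->
  exists M, P M /\ forall X, subset M X -> P X -> subset X M.
Proof.
intros Hunion.
destruct (@classical_sets.Zorn_bigcup T P) as [M [PM Mmax]].
- intros F FP Ftot.
  replace (classical_sets.bigcup F (fun X => X)) with (union_of F).
  + apply Hunion; [exact FP|exact Ftot].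
  + apply functional_extensionality; intros t; apply propositional_extensionality.
    split; [intros [X [FX Xt]]; exists X|intros [X FX Xt]; exists X]; auto.
- exists M; split; [exact PM|].
  intros X MX PX t Xt. apply NNPP; intros nMt.
  apply (Mmax X); [split; [exact MX|intros XM; exact (nMt (XM t Xt))]|exact PX].
Qed.

Lemma choice_on {U V : Type} (A : U -> Prop) (R : U -> V -> Prop) (d : U -> V) :
  (forall x, A x -> exists y, R x y) -> exists f : U -> V, forall x, A x -> R x (f x).
Proof.
intros H. exists (fun x => epsilon (inhabits (d x)) (R x)).
intros x Ax. apply epsilon_spec, H, Ax.
Qed.

Definition embeds {U V : Type} (A : U -> Prop) (B : V -> Prop) : Prop :=
  exists f : U -> V, (forall x, A x -> B (f x)) /\
    (forall x y, A x -> A y -> f x = f y -> x = y).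

Definition prod_pred {U V : Type} (A : U -> Prop) (B : V -> Prop) : U * V -> Prop :=
  fun p => A (fst p) /\ B (snd p).

Lemma embeds_trans {U V W : Type} (A : U -> Prop) (B : V -> Prop) (C : W -> Prop) :
  embeds A B -> embeds B C -> embeds A C.
Proof.
intros [f [fAB finj]] [g [gBC ginj]]. exists (fun x => g (f x)). split; auto.
Qed.

Lemma embeds_weaken {U V : Type} (A A' : U -> Prop) (B : V -> Prop) :
  subset A' A -> embeds A B -> embeds A' B.
Proof. intros HA [f [fAB finj]]. exists f. split; auto. Qed.

Lemma embeds_prod {U U' V V' : Type} (A : U -> Prop) (A' : U' -> Prop)
    (B : V -> Prop) (B' : V' -> Prop) :
  embeds A B -> embeds A' B' -> embeds (prod_pred A A') (prod_pred B B').
Proof.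
intros [f [fAB finj]] [g [gAB ginj]].
exists (fun p => (f (fst p), g (snd p))). split.
- intros p [Ap Ap']. split; simpl; auto.
- intros [x x'] [y y'] [Ax Ax'] [Ay Ay'] E. simpl in *. injection E as Ef Eg.
  f_equal; auto.
Qed.

Lemma embeds_image_inv {T U : Type} (A : T -> Prop) (g : T -> U) (d : U -> T) :
  (forall x y, A x -> A y -> g x = g y -> x = y) ->
  embeds (fun u => exists x, A x /\ u = g x) A.
Proof.
intros ginj.
destruct (choice_on (fun u => exists x, A x /\ u = g x) (fun u x => A x /\ u = g x) d)
  as [h hspec]; [tauto|].
exists h. split.
- intros u Hu. apply hspec, Hu.
- intros u v Hu Hv E. rewrite (proj2 (hspec u Hu)), (proj2 (hspec v Hv)), E. reflexivity.
Qed.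

(* Tagging by the boolean records on which side of [A] a point lies. *)
Lemma embeds_union_bool {T : Type} (A B : T -> Prop) :
  embeds (fun x => ~ A x /\ B x) A ->
  embeds (fun x => A x \/ B x) (prod_pred A (fun _ : bool => True)).
Proof.
intros [f [fA finj]].
exists (fun x => if excluded_middle_informative (A x) then (x, false) else (f x, true)).
split.
- intros x Hx. destruct (excluded_middle_informative (A x)) as [Ax|nAx].
  + split; simpl; auto.
  + split; simpl; auto. apply fA. split; [exact nAx|tauto].
- intros x y Hx Hy.
  destruct (excluded_middle_informative (A x)) as [Ax|nAx],
           (excluded_middle_informative (A y)) as [Ay|nAy];
    intros E; injection E; try discriminate; auto.
  intros Ef. apply finj; tauto.
Qed.

Record matching {T : Type} (A B : T -> Prop) (H : T * T -> Prop) : Prop := {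
  matching_dom : forall x y, H (x, y) -> A x /\ B y;
  matching_fun : forall x y y', H (x, y) -> H (x, y') -> y = y';
  matching_inj : forall x x' y, H (x, y) -> H (x', y) -> x = x' }.

Lemma matching_union {T : Type} (A B : T -> Prop) (F : (T * T -> Prop) -> Prop) :
  (forall H, F H -> matching A B H) -> nested F -> matching A B (union_of F).
Proof.
intros FH HF. split.
- intros x y [H [FH' Hxy]]. exact (matching_dom _ _ _ (FH H FH') x y Hxy).
- intros x y y' Hy Hy'.
  destruct (union_of_common F _ _ HF Hy Hy') as [H [FH' [H1 H2]]].
  exact (matching_fun _ _ _ (FH H FH') _ _ _ H1 H2).
- intros x x' y Hx Hx'.
  destruct (union_of_common F _ _ HF Hx Hx') as [H [FH' [H1 H2]]].
  exact (matching_inj _ _ _ (FH H FH') _ _ _ H1 H2).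
Qed.

Lemma matching_add {T : Type} (A B : T -> Prop) (H : T * T -> Prop) x0 y0 :
  matching A B H -> A x0 -> B y0 ->
  (forall y, ~ H (x0, y)) -> (forall x, ~ H (x, y0)) ->
  matching A B (fun t => H t \/ t = (x0, y0)).
Proof.
intros HH Ax0 By0 Hx0 Hy0. split.
- intros x y [Ht|Ht]; [exact (matching_dom _ _ _ HH _ _ Ht)|].
  injection Ht as -> ->. auto.
- intros x y1 y2 [H1|H1] [H2|H2].
  + exact (matching_fun _ _ _ HH _ _ _ H1 H2).
  + injection H2 as -> ->. contradiction (Hx0 y1).
  + injection H1 as -> ->. contradiction (Hx0 y2).
  + injection H1 as -> ->. injection H2 as ->. reflexivity.
- intros x1 x2 y [H1|H1] [H2|H2].
  + exact (matching_inj _ _ _ HH _ _ _ H1 H2).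
  + injection H2 as -> ->. contradiction (Hy0 x1).
  + injection H1 as -> ->. contradiction (Hy0 x2).
  + injection H1 as -> ->. injection H2 as ->. reflexivity.
Qed.

(* A maximal matching covers [A] or covers [B]: otherwise an unmatched pair
   could be added. *)
Lemma embeds_comparable {T : Type} (A B : T -> Prop) : embeds A B \/ embeds B A.
Proof.
destruct (zorn_subsets (matching A B)) as [H [HH Hmax]];
  [intros F; apply matching_union|].
destruct (classic (forall x, A x -> exists y, H (x, y))) as [Hcov|Hncov].
- left. destruct (choice_on A (fun x y => H (x, y)) id Hcov) as [f fspec].
  exists f. split.
  + intros x Ax. apply (matching_dom _ _ _ HH x), fspec, Ax.
  + intros x y Ax Ay E. apply (matching_inj _ _ _ HH x y (f x)); [apply fspec, Ax|].
    rewrite E. apply fspec, Ay.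
- right. apply not_all_ex_not in Hncov as [x0 Hx0].
  apply imply_to_and in Hx0 as [Ax0 Hx0].
  assert (Hcov : forall y, B y -> exists x, H (x, y)).
  { intros y By. apply NNPP. intros Hy.
    apply Hx0. exists y.
    apply (Hmax (fun t => H t \/ t = (x0, y))); [intros t; auto| |right; reflexivity].
    apply matching_add; eauto. }
  destruct (choice_on B (fun y x => H (x, y)) id Hcov) as [g gspec].
  exists g. split.
  + intros y By. apply (matching_dom _ _ _ HH _ y), gspec, By.
  + intros y y' By By' E. apply (matching_fun _ _ _ HH (g y)); [apply gspec, By|].
    rewrite E. apply gspec, By'.
Qed.

(** * Hessenberg's theorem *)

Section SquareEmbedding.

Variable T : Type.
Variable e : nat -> T.
Hypothesis e_inj : forall m n, e m = e n -> m = n.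

Definition pdom (G : T * T * T -> Prop) (x : T) : Prop := exists y z, G (x, y, z).

(* The graph of an injection [pdom G * pdom G -> pdom G], on an infinite [pdom G]. *)
Record pairing (G : T * T * T -> Prop) : Prop := {
  pairing_fun : forall p z z', G (p, z) -> G (p, z') -> z = z';
  pairing_inj : forall p p' z, G (p, z) -> G (p', z) -> p = p';
  pairing_total : forall x y, pdom G x -> pdom G y -> exists z, G (x, y, z);
  pairing_closed : forall x y z, G (x, y, z) -> pdom G y /\ pdom G z;
  pairing_nat : forall n, pdom G (e n) }.

Lemma pdom_mono (G H : T * T * T -> Prop) : subset G H -> subset (pdom G) (pdom H).
Proof. intros GH x [y [z Gxyz]]. exists y, z. auto. Qed.

Lemma pairing_nat_code :
  pairing (fun t => exists m n, t = (e m, e n, e (to_nat (m, n)))).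
Proof.
assert (Hdom : forall x, pdom (fun t => exists m n, t = (e m, e n, e (to_nat (m, n)))) x
                 <-> exists m, x = e m).
{ intros x. split.
  - intros [y [z [m [n E]]]]. injection E as -> _ _. eauto.
  - intros [m ->]. exists (e 0), (e (to_nat (m, 0))), m, 0. reflexivity. }
split.
- intros p z z' [m [n E]] [m' [n' E']].
  injection E as -> ->. injection E' as E1 E2 ->.
  apply e_inj in E1, E2. subst. reflexivity.
- intros p p' z [m [n E]] [m' [n' E']].
  assert (Ez := eq_trans (eq_sym (f_equal snd E)) (f_equal snd E')).
  cbn [fst snd] in Ez. apply e_inj, (f_equal of_nat) in Ez.
  rewrite !cancel_of_to in Ez. injection Ez as <- <-.
  exact (eq_trans (f_equal fst E) (eq_sym (f_equal fst E'))).
- intros x y Hx Hy. apply Hdom in Hx as [m ->]. apply Hdom in Hy as [n ->].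
  exists (e (to_nat (m, n))), m, n. reflexivity.
- intros x y z [m [n E]]. injection E as -> -> ->. split; apply Hdom; eauto.
- intros n. apply Hdom. eauto.
Qed.

Lemma pairing_union (F : (T * T * T -> Prop) -> Prop) :
  (forall G t, F G -> G t -> pairing G) -> nested F -> (exists G t, F G /\ G t) ->
  pairing (union_of F).
Proof.
intros FG HF [G0 [t0 [FG0 G0t0]]].
assert (sub_union : forall G, F G -> subset G (union_of F)).
{ intros G FG' t Gt. exists G. auto. }
split.
- intros p z z' Hz Hz'.
  destruct (union_of_common F _ _ HF Hz Hz') as [G [FG' [G1 G2]]].
  exact (pairing_fun _ (FG G _ FG' G1) _ _ _ G1 G2).
- intros p p' z Hp Hp'.
  destruct (union_of_common F _ _ HF Hp Hp') as [G [FG' [G1 G2]]].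
  exact (pairing_inj _ (FG G _ FG' G1) _ _ _ G1 G2).
- intros x y [x1 [x2 Hx]] [y1 [y2 Hy]].
  destruct (union_of_common F _ _ HF Hx Hy) as [G [FG' [G1 G2]]].
  destruct (pairing_total _ (FG G _ FG' G1) x y) as [z Gz];
    [exists x1, x2|exists y1, y2|]; auto.
  exists z. apply (sub_union G FG'), Gz.
- intros x y z [G [FG' Gt]].
  destruct (pairing_closed _ (FG G _ FG' Gt) _ _ _ Gt).
  split; eapply pdom_mono; eauto.
- intros n. eapply pdom_mono; [apply (sub_union G0 FG0)|].
  apply (pairing_nat _ (FG G0 t0 FG0 G0t0)).
Qed.

Lemma maximal_pairing :
  exists M, pairing M /\ forall G, subset M G -> pairing G -> subset G M.
Proof.
destruct (zorn_subsets (fun G => (forall t, ~ G t) \/ pairing G)) as [M [PM Mmax]].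
- intros F FP HF.
  destruct (classic (exists G t, F G /\ G t)) as [Hne|Hempty].
  + right. apply pairing_union; auto.
    intros G t FG Gt. destruct (FP G FG) as [Hnil|]; [contradiction (Hnil t)|auto].
  + left. intros t [G [FG Gt]]. apply Hempty. eauto.
- exists M. destruct PM as [Hnil|HM].
  + exfalso. apply (Hnil (e 0, e 0, e (to_nat (0, 0)))).
    apply (Mmax _ (fun t Mt => False_ind _ (Hnil t Mt)) (or_intror pairing_nat_code)).
    exists 0, 0. reflexivity.
  + split; [exact HM|]. intros G MG HG. apply Mmax; [exact MG|right; exact HG].
Qed.

Lemma pairing_embeds (G : T * T * T -> Prop) :
  pairing G -> embeds (prod_pred (pdom G) (pdom G)) (pdom G).
Proof.
intros HG.
destruct (choice_on (prod_pred (pdom G) (pdom G)) (fun p z => G (p, z)) fst) as [f fG].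
{ intros [x y] [Hx Hy]. exact (pairing_total _ HG x y Hx Hy). }
exists f. split.
- intros [x y] Hp. exact (proj2 (pairing_closed _ HG _ _ _ (fG (x, y) Hp))).
- intros p q Hp Hq E. apply (pairing_inj _ HG p q (f p)); [apply fG, Hp|].
  rewrite E. apply fG, Hq.
Qed.

Lemma pairing_embeds_bool (G : T * T * T -> Prop) :
  pairing G -> embeds (prod_pred (pdom G) (fun _ : bool => True)) (pdom G).
Proof.
intros HG. eapply embeds_trans; [|apply pairing_embeds, HG].
exists (fun p : T * bool => (fst p, e (if snd p then 1 else 0))). split.
- intros [x b] [Hx _]. split; [exact Hx|apply (pairing_nat _ HG)].
- intros [x b] [y c] _ _ E. injection E as -> E.
  apply e_inj in E. destruct b, c; congruence.
Qed.

(* [M] extended by a graph sending each new pair into [g (pdom M)], which is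
   disjoint from [pdom M]. *)
Definition pairing_ext (M : T * T * T -> Prop) (B : T -> Prop) (g : T -> T)
    (k : T * T -> T) (t : T * T * T) : Prop :=
  let '(x, y, z) := t in
  M (x, y, z) \/ (B x /\ B y /\ ~ (pdom M x /\ pdom M y) /\ z = g (k (x, y))).

Lemma pairing_extend (M : T * T * T -> Prop) (B : T -> Prop) (g : T -> T)
    (k : T * T -> T) :
  pairing M -> subset (pdom M) B ->
  (forall x, pdom M x -> B (g x) /\ ~ pdom M (g x)) ->
  (forall x y, pdom M x -> pdom M y -> g x = g y -> x = y) ->
  (forall p, prod_pred B B p -> pdom M (k p)) ->
  (forall p q, prod_pred B B p -> prod_pred B B q -> k p = k q -> p = q) ->
  pairing (pairing_ext M B g k).
Proof.
intros HM MB gout ginj kM kinj.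
assert (Mdom : forall x y z, M (x, y, z) -> pdom M x /\ pdom M y /\ pdom M z).
{ intros x y z Mt. split; [exists y, z; exact Mt|exact (pairing_closed _ HM _ _ _ Mt)]. }
assert (ext_dom : forall x, pdom (pairing_ext M B g k) x <-> B x).
{ intros x. split.
  - intros [y [z [Mt|[Bx _]]]]; [apply MB; exists y, z|]; assumption.
  - intros Bx. destruct (classic (pdom M x)) as [[y [z Mt]]|nMx].
    + exists y, z. left. exact Mt.
    + exists x, (g (k (x, x))). right. repeat split; tauto. }
split.
- intros [x y] z z' [M1|N1] [M2|N2].
  + exact (pairing_fun _ HM _ _ _ M1 M2).
  + destruct (Mdom _ _ _ M1) as [Hx [Hy _]]. tauto.
  + destruct (Mdom _ _ _ M2) as [Hx [Hy _]]. tauto.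
  + destruct N1 as [_ [_ [_ ->]]], N2 as [_ [_ [_ ->]]]. reflexivity.
- intros [x y] [x' y'] z [M1|N1] [M2|N2].
  + exact (pairing_inj _ HM _ _ _ M1 M2).
  + destruct (Mdom _ _ _ M1) as [_ [_ Hz]]. destruct N2 as [Bx [By [_ ->]]].
    contradiction (proj2 (gout _ (kM (x', y') (conj Bx By)))).
  + destruct (Mdom _ _ _ M2) as [_ [_ Hz]]. destruct N1 as [Bx [By [_ ->]]].
    contradiction (proj2 (gout _ (kM (x, y) (conj Bx By)))).
  + destruct N1 as [Bx [By [_ ->]]], N2 as [Bx' [By' [_ E]]].
    apply ginj in E; [|apply kM; split; assumption|apply kM; split; assumption].
    apply kinj in E; [exact E|split; assumption|split; assumption].
- intros x y Hx Hy. apply ext_dom in Hx, Hy.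
  destruct (classic (pdom M x /\ pdom M y)) as [[Mx My]|HnM].
  + destruct (pairing_total _ HM x y Mx My) as [z Mz]. exists z. left. exact Mz.
  + exists (g (k (x, y))). right. repeat split; auto.
- intros x y z [Mt|[Bx [By [_ ->]]]]; rewrite !ext_dom.
  + destruct (Mdom _ _ _ Mt) as [_ [Hy Hz]]. split; apply MB; assumption.
  + split; [exact By|]. apply gout, kM. split; assumption.
- intros n. apply ext_dom, MB, (pairing_nat _ HM).
Qed.

(* Otherwise [M] extends to a pairing on [pdom M \/ g (pdom M)], a set that
   still embeds in [pdom M]. *)
Lemma maximal_pairing_absorbs (M : T * T * T -> Prop) :
  pairing M -> (forall G, subset M G -> pairing G -> subset G M) ->
  ~ embeds (pdom M) (fun x => ~ pdom M x).
Proof.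
intros HM Mmax [g [gout ginj]].
set (B := fun x => pdom M x \/ exists u, pdom M u /\ x = g u).
assert (BM : embeds B (pdom M)).
{ eapply embeds_trans; [|apply pairing_embeds_bool, HM].
  apply embeds_union_bool.
  eapply embeds_weaken; [|apply (embeds_image_inv (pdom M) g id ginj)].
  intros x [_ Hx]. exact Hx. }
destruct (embeds_trans _ _ _ (embeds_prod _ _ _ _ BM BM) (pairing_embeds M HM))
  as [k [kM kinj]].
assert (Hext : pairing (pairing_ext M B g k)).
{ apply pairing_extend; auto.
  - intros x Mx. left. exact Mx.
  - intros x Mx. split; [right; exists x; auto|apply gout, Mx]. }
set (u := g (e 0)).
assert (Bu : B u) by (right; exists (e 0); split; [apply (pairing_nat _ HM)|reflexivity]).
assert (nMu : ~ pdom M u) by apply gout, (pairing_nat _ HM).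
assert (Msub : subset M (pairing_ext M B g k)) by (intros [[x y] z] Mt; left; exact Mt).
apply nMu. exists u, (g (k (u, u))). apply (Mmax _ Msub Hext).
right. repeat split; tauto.
Qed.

Theorem square_embedding : exists m : T * T -> T, forall p q, m p = m q -> p = q.
Proof.
destruct maximal_pairing as [M [HM Mmax]].
destruct (embeds_comparable (pdom M) (fun x => ~ pdom M x)) as [Hout|Hin].
{ contradiction (maximal_pairing_absorbs M HM Mmax). }
assert (TM : embeds (fun _ : T => True) (pdom M)).
{ eapply embeds_trans; [|apply pairing_embeds_bool, HM].
  eapply embeds_weaken; [|apply (embeds_union_bool (pdom M) (fun _ => True))].
  - intros x _. right. exact I.
  - eapply embeds_weaken; [|exact Hin]. intros x [Hx _]. exact Hx. }
destruct (embeds_trans _ _ _ (embeds_prod _ _ _ _ TM TM) (pairing_embeds M HM))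
  as [m [_ minj]].
exists m. intros p q. apply minj; split; exact I.
Qed.

End SquareEmbedding.

(** * Separating families *)

Fixpoint join_list (P : JSL) (l : list P) : P :=
  match l with nil => jbot P | x :: r => jjoin P x (join_list P r) end.

Lemma join_list_le (P : JSL) l q :
  jle P (join_list P l) q <-> forall x, In x l -> jle P x q.
Proof.
induction l as [|y r IH]; simpl; split.
- intros _ x [].
- intros _. apply jbot_least.
- intros H x [->|Hx].
  + eapply jle_trans; [apply jjoin_ubl|exact H].
  + apply IH; auto. eapply jle_trans; [apply jjoin_ubr|exact H].
- intros H. apply jjoin_lub; auto. apply IH. auto.
Qed.

Lemma join_list_ub (P : JSL) l x : In x l -> jle P x (join_list P l).
Proof. intros H. apply (proj1 (join_list_le P l _)); auto. apply jle_refl. Qed.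

Lemma join_list_app (P : JSL) l l' :
  join_list P (l ++ l') = jjoin P (join_list P l) (join_list P l').
Proof.
apply jle_antisym.
- apply join_list_le. intros x Hx. apply in_app_or in Hx as [Hx|Hx].
  + eapply jle_trans; [apply join_list_ub, Hx|apply jjoin_ubl].
  + eapply jle_trans; [apply join_list_ub, Hx|apply jjoin_ubr].
- apply jjoin_lub; apply join_list_le; intros x Hx; apply join_list_ub, in_or_app; auto.
Qed.

Lemma join_list_map_le {U : Type} (P : JSL) (a : U -> P) l q :
  jle P (join_list P (map a l)) q <-> forall x, In x l -> jle P (a x) q.
Proof.
rewrite join_list_le. split.
- intros H x Hx. apply H, in_map, Hx.
- intros H w Hw. apply in_map_iff in Hw as [x [<- Hx]]. auto.
Qed.

Lemma jjoin_idPr (P : JSL) x y : jle P x y -> jjoin P x y = y.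
Proof.
intros H. apply jle_antisym; [apply jjoin_lub; auto; apply jle_refl|apply jjoin_ubr].
Qed.

Lemma jjoin_idPl (P : JSL) x y : jle P y x -> jjoin P x y = x.
Proof.
intros H. apply jle_antisym; [apply jjoin_lub; auto; apply jle_refl|apply jjoin_ubl].
Qed.

Lemma ideal_join_list (P : JSL) I l : ideal P I -> (forall x, In x l -> I x) ->
  I (join_list P l).
Proof.
intros [[x0 Ix0] [Idown Idir]]. induction l as [|y r IH]; simpl; intros Hl.
- eapply Idown; [exact Ix0|apply jbot_least].
- destruct (Idir y (join_list P r)) as [z [Iz [Hy Hr]]]; auto.
  eapply Idown; [exact Iz|apply jjoin_lub; assumption].
Qed.

Lemma copy_of_embedding (P Q : JSL) (h : Q -> P) :
  (forall q q', jle Q q q' <-> jle P (h q) (h q')) ->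
  (forall q q', h (jjoin Q q q') = jjoin P (h q) (h q')) ->
  contains_copy P Q.
Proof.
intros hle hjoin. exists (fun p => exists q, h q = p), h.
repeat split.
- intros x y [q <-] [q' <-]. exists (jjoin Q q q'). auto.
- intros q. exists q. reflexivity.
- intros q q' E. apply jle_antisym; apply hle; rewrite E; apply jle_refl.
- intros y [q <-]. exists q. reflexivity.
- exact hjoin.
Qed.

Lemma copy_of_chain_embedding (P Q : JSL) (h : Q -> P) :
  (forall q q', jle Q q q' \/ jle Q q' q) ->
  (forall q q', jle Q q q' <-> jle P (h q) (h q')) ->
  contains_copy P Q.
Proof.
intros Qtotal hle. apply (copy_of_embedding P Q h hle). intros q q'.
destruct (Qtotal q q') as [H|H].
- rewrite (jjoin_idPr Q _ _ H), jjoin_idPr; [reflexivity|apply hle, H].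
- rewrite (jjoin_idPl Q _ _ H), jjoin_idPl; [reflexivity|apply hle, H].
Qed.

Lemma join_morphism_embedding (P Q : JSL) (f : Q -> P) :
  (forall x y, f x = f y -> x = y) ->
  (forall x y, f (jjoin Q x y) = jjoin P (f x) (f y)) ->
  forall q q', jle Q q q' <-> jle P (f q) (f q').
Proof.
intros finj fjoin q q'. split.
- intros H. rewrite <- (jjoin_idPr _ _ _ H), fjoin. apply jjoin_ubl.
- intros H. rewrite <- (finj (jjoin Q q q') q'); [apply jjoin_ubl|].
  rewrite fjoin. apply jjoin_idPr, H.
Qed.

Definition separating (C : Chain) (P : JSL) (a : C -> P) : Prop :=
  forall S, initial_segment C S -> forall x l, ~ S x -> (forall y, In y l -> S y) ->
    ~ jle P (a x) (join_list P (map a l)).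

Lemma separating_below (C : Chain) (P : JSL) (a : C -> P) x l :
  separating C P a -> jle P (a x) (join_list P (map a l)) ->
  exists y, In y l /\ cle C x y.
Proof.
intros Ha Hx. apply NNPP. intros Hno.
apply (Ha (fun y => ~ cle C x y)) with x l; [| |intros y Hy Hxy; eauto|exact Hx].
- intros y z Hy Hzy Hxz. apply Hy. eapply cle_trans; eauto.
- intros Hxx. apply Hxx, cle_refl.
Qed.

Lemma J_alpha_of_separating (C : Chain) (P : JSL) (a : C -> P) :
  separating C P a -> J_alpha C P.
Proof.
intros Ha.
exists (fun S q => exists l, (forall y, In y l -> S y) /\
                            jle P q (join_list P (map a l))).
split.
- intros S _. repeat split.
  + exists (jbot P), nil. split; [intros y []|apply jle_refl].
  + intros x y [l [Hl Hx]] Hyx. exists l. split; [exact Hl|eapply jle_trans; eauto].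
  + intros x y [l [Hl Hx]] [l' [Hl' Hy]].
    exists (join_list P (map a (l ++ l'))). split.
    * exists (l ++ l'). split; [|apply jle_refl].
      intros z Hz. apply in_app_or in Hz as [Hz|Hz]; auto.
    * rewrite map_app, join_list_app.
      split; eapply jle_trans; eauto; [apply jjoin_ubl|apply jjoin_ubr].
- intros S T _ HT. split.
  + intros HST q [l [Hl Hq]]. exists l. split; auto.
  + intros HST x Sx. apply NNPP. intros nTx.
    destruct (HST (a x)) as [l [Hl Hle]].
    * exists (x :: nil). split; [intros y [<-|[]]; exact Sx|].
      apply join_list_ub. left. reflexivity.
    * exact (Ha T HT x l nTx Hl Hle).
Qed.

Definition down (C : Chain) (x : C) : C -> Prop := fun y => cle C y x.
Definition sdown (C : Chain) (x : C) : C -> Prop := fun y => cle C y x /\ y <> x.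

Lemma initial_down (C : Chain) x : initial_segment C (down C x).
Proof. intros y z Hy Hzy. eapply cle_trans; eauto. Qed.

Lemma initial_sdown (C : Chain) x : initial_segment C (sdown C x).
Proof.
intros y z [Hy Hne] Hzy. split; [eapply cle_trans; eauto|].
intros ->. apply Hne, cle_antisym; auto.
Qed.

Lemma separating_of_J_alpha (C : Chain) (P : JSL) :
  J_alpha C P -> exists a : C -> P, separating C P a.
Proof.
intros [F [Fideal Femb]].
assert (Fmono : forall x y, sdown C x y -> subset (F (down C y)) (F (sdown C x))).
{ intros x y [Hyx Hne]. apply Femb; [apply initial_down|apply initial_sdown|].
  intros z Hzy. split; [eapply cle_trans; eauto|].
  intros ->. apply Hne, cle_antisym; auto. }
destruct (choice_on (fun _ => True)
            (fun x p => F (down C x) p /\ ~ F (sdown C x) p) (fun _ => jbot P))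
  as [a Ha].
{ intros x _. apply NNPP. intros Hno.
  assert (Hsub : subset (F (down C x)) (F (sdown C x))).
  { intros p Hp. apply NNPP. intros Hn. apply Hno. exists p. auto. }
  apply Femb in Hsub; [|apply initial_down|apply initial_sdown].
  apply (Hsub x (cle_refl C x)). reflexivity. }
exists a. intros S HS x l nSx Hl Hle.
apply (proj2 (Ha x I)).
destruct (Fideal _ (initial_sdown C x)) as [_ [Fdown _]].
apply (Fdown (join_list P (map a l))); [|exact Hle].
apply ideal_join_list; [apply Fideal, initial_sdown|].
intros w Hw. apply in_map_iff in Hw as [y [<- Hy]].
apply (Fmono x y); [|apply (Ha y I)].
split.
- destruct (cle_total C y x) as [H|H]; auto.
  contradiction nSx. eapply HS; [apply Hl, Hy|exact H].
- intros ->. exact (nSx (Hl x Hy)).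
Qed.

Lemma separating_copy (C : Chain) (P Q : JSL) (a : C -> Q) :
  contains_copy P Q -> separating C Q a -> exists b : C -> P, separating C P b.
Proof.
intros [_ [f [_ [_ [finj [_ fjoin]]]]]] Ha.
pose proof (join_morphism_embedding P Q f finj fjoin) as fle.
exists (fun x => f (a x)). intros S HS x l nSx Hl Hle.
apply (Ha S HS x l nSx Hl), fle.
eapply jle_trans; [exact Hle|].
rewrite <- map_map. apply join_list_map_le. intros y Hy.
apply fle, join_list_ub, Hy.
Qed.

Lemma J_alpha_copy (C : Chain) (P Q : JSL) :
  contains_copy P Q -> J_alpha C Q -> J_alpha C P.
Proof.
intros HPQ HQ. destruct (separating_of_J_alpha C Q HQ) as [a Ha].
destruct (separating_copy C P Q a HPQ Ha) as [b Hb].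
exact (J_alpha_of_separating C P b Hb).
Qed.

(** * Obstructions *)

Section ChainWithBottom.

Variable C : Chain.

Definition ole (o o' : option C) : Prop :=
  match o, o' with
  | None, _ => True
  | Some _, None => False
  | Some x, Some y => cle C x y
  end.

Definition ojoin (o o' : option C) : option C :=
  match o, o' with
  | None, _ => o'
  | _, None => o
  | Some x, Some y => if excluded_middle_informative (cle C x y) then Some y else Some x
  end.

Lemma ole_refl o : ole o o.
Proof. destruct o; simpl; auto. apply cle_refl. Qed.

Lemma ole_trans o1 o2 o3 : ole o1 o2 -> ole o2 o3 -> ole o1 o3.
Proof. destruct o1, o2, o3; simpl; try tauto. apply cle_trans. Qed.

Lemma ole_antisym o1 o2 : ole o1 o2 -> ole o2 o1 -> o1 = o2.
Proof. destruct o1, o2; simpl; try tauto. intros; f_equal; apply cle_antisym; auto. Qed.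

Lemma ole_total o1 o2 : ole o1 o2 \/ ole o2 o1.
Proof. destruct o1, o2; simpl; auto. apply cle_total. Qed.

Lemma ojoin_ubl o o' : ole o (ojoin o o').
Proof.
destruct o as [x|], o' as [y|]; simpl; auto; try apply cle_refl.
destruct (excluded_middle_informative (cle C x y)); simpl; auto. apply cle_refl.
Qed.

Lemma ojoin_ubr o o' : ole o' (ojoin o o').
Proof.
destruct o as [x|], o' as [y|]; simpl; auto; try apply cle_refl.
destruct (excluded_middle_informative (cle C x y)); simpl; [apply cle_refl|].
destruct (cle_total C x y); tauto.
Qed.

Lemma ojoin_lub o o' o'' : ole o o'' -> ole o' o'' -> ole (ojoin o o') o''.
Proof.
destruct o as [x|], o' as [y|]; simpl; auto.
destruct (excluded_middle_informative (cle C x y)); simpl; auto.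
Qed.

Lemma obot_least o : ole None o.
Proof. exact I. Qed.

Definition chainJ : JSL :=
  {| jtype := option C; jle := ole; jjoin := ojoin; jbot := None;
     jle_refl := ole_refl; jle_trans := ole_trans; jle_antisym := ole_antisym;
     jjoin_ubl := ojoin_ubl; jjoin_ubr := ojoin_ubr; jjoin_lub := ojoin_lub;
     jbot_least := obot_least |}.

Lemma ole_ojoin x o o' : ole (Some x) (ojoin o o') -> ole (Some x) o \/ ole (Some x) o'.
Proof.
destruct o as [y|], o' as [z|]; simpl; auto.
destruct (excluded_middle_informative (cle C y z)); simpl; auto.
Qed.

Lemma separating_chainJ : separating C chainJ Some.
Proof.
intros S HS x l nSx Hl Hle. apply nSx.
assert (Hbelow : exists y, In y l /\ cle C x y).
{ clear Hl. induction l as [|y r IH]; [destruct Hle|].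
  destruct (ole_ojoin x _ _ Hle) as [Hy|Hr].
  - exists y. split; [left; reflexivity|exact Hy].
  - destruct (IH Hr) as [z [Hz Hxz]]. exists z. split; [right|]; assumption. }
destruct Hbelow as [y [Hy Hxy]]. exact (HS y x (Hl y Hy) Hxy).
Qed.

(* For finite [C], the join of [a] over the principal down-set of [x]
   embeds [chainJ]. *)
Lemma copy_chainJ (P : JSL) (a : C -> P) :
  (exists l, forall y : C, In y l) -> separating C P a -> contains_copy P chainJ.
Proof.
intros [l Hl] Ha.
set (down_list := fun x => filter (fun y =>
       if excluded_middle_informative (cle C y x) then true else false) l).
assert (In_down_list : forall x y, In y (down_list x) <-> cle C y x).
{ intros x y. unfold down_list. rewrite filter_In.
  destruct (excluded_middle_informative (cle C y x)) as [Hyx|Hyx].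
  - split; [tauto|auto].
  - split; [intros [_ E]; discriminate|tauto]. }
set (h := fun o : chainJ => match o with
          | None => jbot P
          | Some x => join_list P (map a (down_list x)) end).
assert (ah : forall x, jle P (a x) (h (Some x))).
{ intros x. apply join_list_ub, in_map, In_down_list, cle_refl. }
apply (copy_of_chain_embedding P chainJ h ole_total).
intros [x|] [y|]; simpl; split; try tauto; try (intros; apply jbot_least).
- intros Hxy. apply join_list_map_le. intros z Hz.
  apply join_list_ub, in_map, In_down_list.
  eapply cle_trans; [apply In_down_list, Hz|exact Hxy].
- intros Hh. destruct (separating_below C P a x _ Ha (jle_trans _ _ _ _ (ah x) Hh))
    as [z [Hz Hxz]].
  eapply cle_trans; [exact Hxz|apply In_down_list, Hz].
- intros Hh. destruct (separating_below C P a x nil Ha (jle_trans _ _ _ _ (ah x) Hh))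
    as [z [[] _]].
Qed.

End ChainWithBottom.

Section Generated.

Variables (U : Type) (P : JSL) (a : U -> P).

Definition generated (p : P) : Prop := exists l, p = join_list P (map a l).

Lemma generated_join p q : generated p -> generated q -> generated (jjoin P p q).
Proof.
intros [l ->] [l' ->]. exists (l ++ l'). rewrite map_app, join_list_app. reflexivity.
Qed.

Lemma generated_bot : generated (jbot P).
Proof. exists nil. reflexivity. Qed.

Lemma generated_gen x : generated (a x).
Proof. exists (x :: nil). symmetry. apply jjoin_idPl, jbot_least. Qed.

Definition gen_type := {p : P | generated p}.

Definition gen_le (p q : gen_type) : Prop := jle P (proj1_sig p) (proj1_sig q).

Definition gen_join (p q : gen_type) : gen_type :=
  exist _ (jjoin P (proj1_sig p) (proj1_sig q))
    (generated_join _ _ (proj2_sig p) (proj2_sig q)).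

Lemma gen_le_antisym p q : gen_le p q -> gen_le q p -> p = q.
Proof.
destruct p as [p Hp], q as [q Hq]. unfold gen_le; simpl. intros H1 H2.
apply subset_eq_compat, jle_antisym; assumption.
Qed.

Definition genJ : JSL :=
  {| jtype := gen_type; jle := gen_le; jjoin := gen_join;
     jbot := exist _ (jbot P) generated_bot;
     jle_refl := fun p => jle_refl P _;
     jle_trans := fun p q r => jle_trans P _ _ _;
     jle_antisym := gen_le_antisym;
     jjoin_ubl := fun p q => jjoin_ubl P _ _;
     jjoin_ubr := fun p q => jjoin_ubr P _ _;
     jjoin_lub := fun p q r => jjoin_lub P _ _ _;
     jbot_least := fun p => jbot_least P _ |}.

Definition gen (x : U) : genJ := exist _ (a x) (generated_gen x).

Lemma val_join_list_gen l : proj1_sig (join_list genJ (map gen l)) = join_list P (map a l).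
Proof. induction l as [|y r IH]; [reflexivity|]. cbn [map join_list]. rewrite <- IH. reflexivity. Qed.

Lemma genJ_spanned (q : genJ) : exists l, q = join_list genJ (map gen l).
Proof.
destruct q as [p [l Hl]]. exists l.
apply gen_le_antisym; unfold gen_le; simpl; rewrite val_join_list_gen, Hl; apply jle_refl.
Qed.

End Generated.

Lemma copy_of_relations {U : Type} (P Q : JSL) (a : U -> Q) (b : U -> P) :
  (forall q, exists l, q = join_list Q (map a l)) ->
  (forall x l, jle Q (a x) (join_list Q (map a l)) <->
               jle P (b x) (join_list P (map b l))) ->
  contains_copy P Q.
Proof.
intros Hspan Hrel.
assert (Hjoins : forall l l', jle Q (join_list Q (map a l)) (join_list Q (map a l')) <->
                              jle P (join_list P (map b l)) (join_list P (map b l'))).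
{ intros l l'. rewrite !join_list_map_le. split; intros H x Hx; apply Hrel; auto. }
destruct (choice_on (fun _ => True) (fun q l => q = join_list Q (map a l)) (fun _ => nil))
  as [L HL]; [intros q _; apply Hspan|].
apply (copy_of_embedding P Q (fun q => join_list P (map b (L q)))).
- intros q q'. rewrite <- Hjoins, <- (HL q I), <- (HL q' I). reflexivity.
- intros q q'. rewrite <- join_list_app, <- map_app.
  assert (E : join_list Q (map a (L (jjoin Q q q'))) = join_list Q (map a (L q ++ L q'))).
  { rewrite <- HL, map_app, join_list_app, <- HL, <- HL; trivial. }
  apply jle_antisym; apply Hjoins; rewrite E; apply jle_refl.
Qed.

Lemma finite_or_nat_embedding (T : Type) :
  (exists l, forall y : T, In y l) \/
  exists e : nat -> T, forall m n, e m = e n -> m = n.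
Proof.
destruct (classic (exists l, forall y : T, In y l)) as [Hfin|Hinf]; [left; exact Hfin|].
right.
assert (Hfresh : forall l : list T, exists y, ~ In y l).
{ intros l. apply NNPP. intros H. apply Hinf. exists l. intros y.
  apply NNPP. intros Hy. apply H. exists y. exact Hy. }
destruct (Hfresh nil) as [y0 _].
destruct (choice_on (fun _ => True) (fun l y => ~ In y l) (fun _ => y0)) as [fresh Hf];
  [intros l _; apply Hfresh|].
set (prefix := fix prefix n := match n with 0 => nil | S k => fresh (prefix k) :: prefix k end).
assert (Hprefix : forall m n, m < n -> In (fresh (prefix m)) (prefix n)).
{ intros m n Hmn. induction Hmn as [|n _ IH]; simpl; [left|right]; auto. }
exists (fun n => fresh (prefix n)). intros m n E.
destruct (Nat.lt_trichotomy m n) as [Hlt|[Heq|Hgt]]; [exfalso| exact Heq|exfalso].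
- apply (Hf (prefix n) I). rewrite <- E. apply Hprefix, Hlt.
- apply (Hf (prefix m) I). rewrite E. apply Hprefix, Hgt.
Qed.

Lemma list_code (T : Type) (e : nat -> T) (m : T * T -> T) :
  (forall i j, e i = e j -> i = j) -> (forall p q, m p = m q -> p = q) ->
  exists E : T * list T -> T, forall p q, E p = E q -> p = q.
Proof.
intros e_inj m_inj.
set (code := fix code (l : list T) : T :=
       match l with nil => e 0 | x :: r => m (x, code r) end).
assert (code_inj : forall l l', length l = length l' -> code l = code l' -> l = l').
{ induction l as [|x r IH]; intros [|x' r'] Hlen E; simpl in *; try discriminate; auto.
  apply m_inj in E. injection E as -> E. f_equal. apply IH; auto. }
exists (fun p => m (fst p, m (e (length (snd p)), code (snd p)))).
intros [x l] [x' l'] E. simpl in E.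
apply m_inj in E. injection E as -> E. apply m_inj in E. injection E as E1 E2.
apply e_inj in E1. f_equal. apply code_inj; assumption.
Qed.

Section Obstructions.

Variable C : Chain.
Variable E : C * list C -> C.
Hypothesis E_inj : forall p q, E p = E q -> p = q.

(* Via [E], the relations between [a] and its finite joins become a subset of
   [C]; this bounds the number of obstructions by [2^|C|]. *)
Definition relation_code (Q : JSL) (a : C -> Q) : C -> Prop :=
  fun z => exists x l, z = E (x, l) /\ jle Q (a x) (join_list Q (map a l)).

Lemma relation_codeE (Q : JSL) (a : C -> Q) x l :
  relation_code Q a (E (x, l)) <-> jle Q (a x) (join_list Q (map a l)).
Proof.
split; [|intros H; exists x, l; auto].
intros [x' [l' [Ez H]]]. apply E_inj in Ez. injection Ez as -> ->. exact H.
Qed.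

Definition obstruction_code (A : C -> Prop) : Prop :=
  exists (Q : JSL) (a : C -> Q),
    (forall q, exists l, q = join_list Q (map a l)) /\ separating C Q a /\
    (forall z, A z <-> relation_code Q a z).

Definition obstruction_index : Type := {A : C -> Prop | obstruction_code A}.

Definition obstruction (i : obstruction_index) : JSL :=
  proj1_sig (constructive_indefinite_description _ (proj2_sig i)).

Lemma obstruction_spec (i : obstruction_index) :
  exists a : C -> obstruction i,
    (forall q, exists l, q = join_list (obstruction i) (map a l)) /\
    separating C (obstruction i) a /\
    (forall z, proj1_sig i z <-> relation_code (obstruction i) a z).
Proof.
unfold obstruction.
destruct (constructive_indefinite_description _ (proj2_sig i)) as [Q HQ]. exact HQ.
Qed.

Lemma forb_obstructions (P : JSL) : ~ J_alpha C P <-> Forb obstruction P.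
Proof.
split.
- intros nJ i Hcopy. apply nJ, (J_alpha_copy C P (obstruction i) Hcopy).
  destruct (obstruction_spec i) as [a [_ [Ha _]]]. exact (J_alpha_of_separating _ _ a Ha).
- intros Hforb HJ. destruct (separating_of_J_alpha C P HJ) as [a Ha].
  assert (Hrel : forall x l, jle (genJ C P a) (gen C P a x)
                                 (join_list (genJ C P a) (map (gen C P a) l)) <->
                             jle P (a x) (join_list P (map a l))).
  { intros x l. change (jle P (a x) (proj1_sig (join_list (genJ C P a) (map (gen C P a) l)))
                       <-> jle P (a x) (join_list P (map a l))).
    rewrite val_join_list_gen. reflexivity. }
  assert (Hcode : obstruction_code (relation_code P a)).
  { exists (genJ C P a), (gen C P a). repeat split.
    - apply genJ_spanned.
    - intros S HS x l nSx Hl Hle. apply Hrel in Hle. exact (Ha S HS x l nSx Hl Hle).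
    - intros [x [l [-> H]]]. apply relation_codeE, Hrel, H.
    - intros [x [l [-> H]]]. apply relation_codeE, Hrel, H. }
  apply (Hforb (exist _ _ Hcode)).
  destruct (obstruction_spec (exist _ _ Hcode)) as [b [Hspan [_ Hb]]].
  apply (copy_of_relations P _ b a Hspan). intros x l.
  rewrite <- relation_codeE, <- Hb. simpl. apply relation_codeE.
Qed.

End Obstructions.

Theorem theorem0p3 :
  forall C : Chain,
    exists (I : Type) (B : I -> JSL) (code : I -> (C -> Prop)),
      (forall i j, code i = code j -> i = j) /\
      (forall P : JSL, ~ J_alpha C P <-> Forb B P).
Proof.
intros C. destruct (finite_or_nat_embedding C) as [Hfin|[e e_inj]].
- exists unit, (fun _ => chainJ C), (fun _ _ => True).
  split; [intros [] [] _; reflexivity|]. intros P. split.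
  + intros nJ [] Hcopy. apply nJ, (J_alpha_copy C P (chainJ C) Hcopy).
    exact (J_alpha_of_separating _ _ _ (separating_chainJ C)).
  + intros Hforb HJ. destruct (separating_of_J_alpha C P HJ) as [a Ha].
    exact (Hforb tt (copy_chainJ C P a Hfin Ha)).
- destruct (square_embedding C e e_inj) as [m m_inj].
  destruct (list_code C e m e_inj m_inj) as [E E_inj].
  exists (obstruction_index C E), (obstruction C E), (@proj1_sig _ _). split.
  + intros [A HA] [A' HA'] EA. simpl in EA. subst A'. f_equal. apply proof_irrelevance.
  + exact (forb_obstructions C E E_inj).
Qed.
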